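(* Let $p$ be a prime with $\frac12 n<p\le n-3$, let $\pi\in A_n$ have a cycle of length $p$ in its disjoint cycle decomposition, and let $C$ be a conjugacy class of $S_n$. Then \begin{align*} \#\{\sigma\in A_n:~[\pi,\sigma]\in C \text{ and } \langle\pi,\sigma\rangle=A_n\} =\;&\#\{\sigma\in A_n:~[\pi,\sigma]\in C\}\\ &-\#\{\sigma\in A_n:~[\pi,\sigma]\in C \text{ and } \langle\pi,\sigma\rangle\text{ is not transitive on }\{1,\dots,n\}\}. \end{align*}
   Context: $[\pi,\sigma]=\pi^{-1}\sigma^{-1}\pi\sigma$. *)

From mathcomp Require Import all_boot all_fingroup all_solvable.
Set Implicit Arguments. Unset Strict Implicit. Unset Printing Implicit Defensive.

From mathcomp Require Import all_boot all_fingroup all_solvable.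
From mathcomp Require Import zify.
Set Implicit Arguments. Unset Strict Implicit. Unset Printing Implicit Defensive.
Local Open Scope group_scope.

(* Every cycle of [pi] other than its [p]-cycle has length at most [n - p < p], so
   [c := pi ^+ (n - p)`!] is a [p]-cycle. Hence, for [s] in [A_n], [<<[set pi; s]>>]
   equals [A_n] as soon as it is transitive, by Jordan's theorem in the case [n < 2p]:
   a transitive group [G] of degree [n] containing a [p]-cycle [c], with [p <= n - 3],
   contains [A_n].
   If [x] is fixed by [c], every suborbit of [G_x] has more than [n / 2] points: the
   small suborbits generate a system of blocks, and a block meeting the support [D]
   of [c] and stable under a power of [c] contains all of [D]. So [G_x] is transitive
   on the remaining points and, iterating, [G] is [(n - p)]-transitive. As [<[c]>] is
   a Sylow subgroup of the pointwise stabiliser of [~: D], the Frattini argument lifts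
   the transpositions [(y z)] and [(x y)] of fixed points of [c] to elements normalising
   [<[c]>]. Their commutator centralises [c], so its [p ^ 2]-th power is trivial on [D]
   and is a 3-cycle; as [G] is 3-transitive it contains all 3-cycles, hence [A_n]. *)

Section PermOrbits.
Variable T : finType.
Implicit Types (s : {perm T}) (x : T).

Lemma card_porbit_dvdn s x m : (#|porbit s x| %| m)%N = ((s ^+ m) x == x).
Proof.
set l := #|porbit s x|; have l_gt0 : (0 < l)%N by rewrite lt0n card_porbit_neq0.
have fix_lt i : (i < l)%N -> ((s ^+ i) x == x) = (i == 0%N).
  move=> lt_il; rewrite permX -(nth_traject _ lt_il x).
  rewrite -[x in _ == x](nth_traject s l_gt0 x).
  by rewrite nth_uniq ?size_traject ?uniq_traject_porbit.
rewrite /dvdn -fix_lt ?ltn_mod // {2}(divn_eq m l) mulnC expgD expgM permM.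
by rewrite [((s ^+ l) ^+ _) x]permX iter_fix // permX iter_porbit.
Qed.

Lemma porbit_expg s x k :
  coprime k #|porbit s x| -> porbit (s ^+ k) x = porbit s x.
Proof.
rewrite coprime_sym => co_k; apply/eqP; rewrite eqEcard; apply/andP; split.
  by apply/subsetP => _ /porbitP[i ->]; rewrite -expgM mem_porbit.
apply: dvdn_leq; first by rewrite lt0n card_porbit_neq0.
by rewrite -(Gauss_dvdr _ co_k) card_porbit_dvdn expgM permX iter_porbit.
Qed.

End PermOrbits.

Section Connect.
Variable T : finType.

Lemma homo_connect (e : rel T) (f : T -> T) :
  {homo f : x y / e x y} -> {homo f : x y / connect e x y}.
Proof.
move=> fe x y /connectP[q]; elim: q x => [|w q IHq] x /=; first by move=> _ ->.
by case/andP=> /fe exw /IHq wq /wq; apply/connect_trans/connect1.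
Qed.

Lemma connect_stable (e : rel T) (a : pred T) x y :
  (forall u v, e u v -> a u -> a v) -> connect e x y -> a x -> a y.
Proof.
move=> ea /connectP[q]; elim: q x => [|w q IHq] x /=; first by move=> _ ->.
by case/andP=> exw /IHq wq /wq + /(ea _ _ exw); apply.
Qed.

End Connect.

Lemma prime_dvdn_fact p m : prime p -> (p %| m`!)%N = (p <= m)%N.
Proof.
move=> p_pr; elim: m => [|m IHm]; first by rewrite dvdn1 leqn0; case: p p_pr => [|[]].
rewrite factS Euclid_dvdM // IHm; case: (ltngtP p m.+1) => [lt_pm | lt_mp | ->].
- by move: lt_pm; rewrite ltnS => ->; rewrite orbT.
- by rewrite gtnNdvd // leqNgt (ltnW lt_mp).
- by rewrite dvdnn.
Qed.

Lemma logn_fact_small p m : prime p -> (m < 2 * p)%N -> (logn p m`! <= 1)%N.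
Proof.
move=> p_pr lt_m2p; have p_gt1 := prime_gt1 p_pr.
rewrite logn_fact //; case: m lt_m2p => [|m] lt_m2p; first by rewrite big_geq.
rewrite big_ltn // expn1 big_nat_cond big1 => [|k /andP[/andP[k_ge2 _] _]].
  by rewrite addn0 -ltnS ltn_divLR ?prime_gt0 // mulnC.
apply: divn_small; apply: (leq_trans lt_m2p); apply: (@leq_trans (p ^ 2)).
  by rewrite expnS expn1 leq_mul2r p_gt1 orbT.
exact: leq_pexp2l (ltnW p_gt1) k_ge2.
Qed.

Lemma atrans_large_orbits (aT : finGroupType) (sT : finType)
    (to : {action aT &-> sT}) (A : {group aT}) (S : {set sT}) x :
  [acts A, on S | to] -> x \in S ->
  (forall v, v \in S -> #|S| < 2 * #|orbit to A v|)%N ->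
  [transitive A, on S | to].
Proof.
move=> actsA Sx large; apply/imsetP; exists x => //; apply/setP => v.
apply/idP/idP => [Sv|]; last by apply: subsetP; rewrite (acts_sub_orbit _ actsA).
have [u /setIP[xAu vAu]] : exists u, u \in orbit to A x :&: orbit to A v.
  apply/set0Pn; rewrite -card_gt0; move: (cardsUI (orbit to A x) (orbit to A v)).
  have : (#|orbit to A x :|: orbit to A v| <= #|S|)%N.
    by apply: subset_leq_card; rewrite subUset !(acts_sub_orbit _ actsA) Sx.
  by move: (large x Sx) (large v Sv); lia.
by rewrite -(orbit_eqP xAu) (orbit_eqP vAu) orbit_refl.
Qed.

Section PermRestriction.
Variable T : finType.
Implicit Types (A : {set T}) (f g : {perm T}).

Lemma perm_on_astabs A f : perm_on A f -> f \in 'N(A | 'P).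
Proof. by move=> fA; apply/astabsP => u; apply: perm_closed. Qed.

Lemma astabs_eq_in A f g : f \in 'N(A | 'P) -> {in A, g =1 f} -> g \in 'N(A | 'P).
Proof.
rewrite -!astab1_set => /astab1P fA gf; apply/astab1P.
by rewrite -{2}fA; apply: eq_in_imset => u /gf.
Qed.

Lemma restr_perm_eq_in A f g : f \in 'N(A | 'P) -> g \in 'N(A | 'P) ->
  {in A, f =1 g} -> restr_perm A f = restr_perm A g.
Proof.
move=> fA gA fg; apply/permP => u; have [uA | uA] := boolP (u \in A).
  by rewrite !restr_permE ?fg.
by rewrite !(out_perm (restr_perm_on _ _)).
Qed.

Lemma restr_perm_inj A f g : f \in 'C(~: A | 'P) -> g \in 'C(~: A | 'P) ->
  restr_perm A f = restr_perm A g -> f = g.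
Proof.
move=> fC gC fg; apply/permP => u; have [uA | uA] := boolP (u \in A).
  have nA h : h \in 'C(~: A | 'P) -> h \in 'N(A | 'P).
    by move=> hC; rewrite -astabsC (subsetP (astab_sub _ _)).
  by rewrite -(restr_permE (nA _ fC) uA) fg restr_permE ?nA.
have uCA : u \in ~: A by rewrite inE.
by rewrite -[f u]/('P%act u f) -[g u]/('P%act u g) !(astab_act _ uCA).
Qed.

End PermRestriction.

Section ThreeCycles.
Variable T : finType.
Implicit Types x y z : T.

Lemma commg_tperm x y z : x != y -> y != z -> x != z ->
  [~ tperm y z, tperm x y] = tperm x y * tperm y z.
Proof.
move=> xy yz xz; rewrite commgEl tpermV [RHS]conjgC !tpermJ tpermR tpermL.
by rewrite !tpermD // eq_sym.
Qed.

Lemma tperm_cycle3 x y z : x != y -> y != z -> x != z ->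
  (tperm x y * tperm y z) ^+ 3 = 1.
Proof.
move=> xy yz xz; set c := tperm x y * tperm y z.
have c_sq : c = (c ^-1) ^+ 2.
  by rewrite /c -{1}commg_tperm // /commg invMg !tpermV expgS expg1 !mulgA tpermV.
by rewrite expgS {1}c_sq expgVn mulVg.
Qed.

Lemma Alt_sub_3cycle (G : {group {perm T}}) x y z :
  (4 < #|T|)%N -> [transitive^3 G, on setT | 'P] ->
  x != y -> y != z -> x != z -> tperm x y * tperm y z \in G -> 'Alt_T \subset G.
Proof.
move=> T_gt4 trG xy yz xz; set t := tperm x y * tperm y z => tG.
have t_Alt : t \in 'Alt_T by rewrite Alt_even odd_permM !odd_tperm xy yz.
have classG : t ^: 'Alt_T \subset G.
  apply/subsetP => _ /imsetP[s _ ->].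
  have dtuple u v w : u != v -> v != w -> u != w ->
      [tuple u; v; w] \in 3.-dtuple([set: T]).
    by move=> uv vw uw; rewrite inE /= !inE negb_or uv uw vw; apply/subsetP.
  have sD : [tuple s x; s y; s z] \in 3.-dtuple([set: T]).
    by apply: dtuple; rewrite (inj_eq perm_inj).
  have [g gG /(congr1 val) [gx gy gz]] := atransP2 trG (dtuple _ _ _ xy yz xz) sD.
  by rewrite /t conjMg !tpermJ gx gy gz -!tpermJ -conjMg groupJ.
have normalN : <<t ^: 'Alt_T>> <| 'Alt_T.
  by rewrite /normal gen_subG class_subG //= norms_gen ?class_norm.
have [_ /(_ _ normalN)[N1 | <-]] := simpleP _ (simple_Alt5 T_gt4);
  last by rewrite gen_subG.
have : t \in <<t ^: 'Alt_T>> by rewrite mem_gen ?class_refl.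
rewrite N1 inE => /eqP/permP/(_ x); rewrite permM tpermL tpermL perm1 => /eqP.
by rewrite eq_sym (negPf xz).
Qed.

End ThreeCycles.

Section PointwiseStabilisers.
Variables (aT : finGroupType) (sT : finType) (to : {action aT &-> sT}) (A : {set aT}).

Lemma subastab_set0 : 'C_A(set0 | to) = A.
Proof. by apply/setIidPl/subsetP => a _; apply/astabP => u; rewrite inE. Qed.

Lemma subastab1_astab (F : {set sT}) x : 'C_('C_A(F | to))[x | to] = 'C_A(x |: F | to).
Proof. by rewrite -setIA -astabU setUC. Qed.

End PointwiseStabilisers.

Lemma setCU1 (T : finType) (F : {set T}) x : ~: F :\ x = ~: (x |: F).
Proof. by rewrite setCU setDE setIC. Qed.

Lemma cycle_Sylow (gT : finGroupType) (K : {group gT}) p q :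
  prime p -> (logn p #|K| <= 1)%N -> q \in K -> #[q] = p -> p.-Sylow(K) <[q]>.
Proof.
move=> p_pr le_log Kq oq; rewrite pHallE cycle_subG Kq -orderE oq p_part /=.
have : (0 < logn p #|K|)%N by rewrite logn_gt0 mem_primes p_pr cardG_gt0 -oq order_dvdG.
by move: le_log; case: (logn p #|K|) => [|[|]].
Qed.

Lemma commute_commg_norm_cycle (gT : finGroupType) (c h1 h2 : gT) :
  h1 \in 'N(<[c]>) -> h2 \in 'N(<[c]>) -> commute c [~ h1, h2].
Proof.
have conjX h : h \in 'N(<[c]>) -> exists k, c ^ h = c ^+ k.
  by move=> /normP nh; apply/cycleP; rewrite -[<[c]>]nh memJ_conjg cycle_id.
move=> /groupVr/conjX[k1 e1] /groupVr/conjX[k2 e2].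
have E : c ^ (h1^-1 * h2^-1) = c ^ (h2^-1 * h1^-1).
  by rewrite !conjgM e1 e2 !conjXg e1 e2 -!expgM mulnC.
apply/commgP/conjg_fixP.
have -> : [~ h1, h2] = (h1^-1 * h2^-1) * (h2^-1 * h1^-1)^-1.
  by rewrite /commg invMg !invgK !mulgA.
by rewrite conjgM E conjgK.
Qed.

Section PrimeCycle.
Variables (T : finType) (p : nat) (c : {perm T}) (D : {set T}).
Hypotheses (p_pr : prime p) (c_on : perm_on D c) (D_orbit : D \in porbits c)
  (card_D : #|D| = p).

Lemma cycle_support_nonempty : exists d, d \in D.
Proof. by apply/set0Pn; rewrite -card_gt0 card_D prime_gt0. Qed.

Lemma porbit_cycle u : u \in D -> porbit c u = D.
Proof. by case/imsetP: D_orbit => x _ -> ux; apply/eqP; rewrite eq_porbit_mem. Qed.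

Lemma cycle_fixE u : (c u == u) = (u \notin D).
Proof.
apply/idP/idP => [cu | /(out_perm c_on)->//]; apply/negP => uD.
move: cu; rewrite -[c u]/((c ^+ 1) u) -card_porbit_dvdn porbit_cycle // card_D.
by rewrite dvdn1 gtn_eqF ?prime_gt1.
Qed.

Lemma cycle_neq1 : c != 1.
Proof.
have [d dD] := cycle_support_nonempty.
by apply: contraTneq dD => c1; rewrite -cycle_fixE c1 perm1.
Qed.

Lemma cycle_expp : c ^+ p = 1.
Proof.
apply/permP => u; rewrite perm1; have [uD | uD] := boolP (u \in D).
  by apply/eqP; rewrite -card_porbit_dvdn porbit_cycle ?card_D.
by rewrite permX iter_fix ?(out_perm c_on).
Qed.

Lemma order_cycle : #[c] = p.
Proof. exact: nt_prime_order p_pr cycle_expp cycle_neq1. Qed.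

Lemma porbit_cycle_generator e u : e \in <[c]> -> e != 1 -> u \in D -> porbit e u = D.
Proof.
move=> ce e1 uD; have pr_c : prime #|<[c]>| by rewrite -orderE order_cycle.
by rewrite porbitE -(nt_gen_prime pr_c) ?inE ?e1 // -porbitE porbit_cycle.
Qed.

Lemma cycle_support_sub_stable (B : {set T}) e :
  e \in <[c]> -> e != 1 -> e @: B = B -> D :&: B != set0 -> D \subset B.
Proof.
move=> ce e1 eB /set0Pn[d /setIP[dD dB]].
rewrite -(porbit_cycle_generator ce e1 dD) porbitE (acts_sub_orbit _ _) // cycle_subG.
by rewrite -[_ \in _]/(e \in 'N(B | 'P)) -astab1_set; apply/astab1P.
Qed.

Lemma cent_cycle_expp w : commute c w -> w ^+ p \in 'C(D | 'P).
Proof.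
move=> cw; have cwE u : c (w u) = w (c u) by rewrite -!permM cw.
have wD : w \in 'N(D | 'P).
  apply/astabsP => u; apply/negb_inj.
  by rewrite -!cycle_fixE /= cwE (inj_eq perm_inj).
have [d dD] := cycle_support_nonempty.
have /porbitP[j wdj] : w d \in porbit c d by rewrite porbit_cycle // (astabs_act _ wD).
have w_cj : {in D, w =1 c ^+ j}.
  move=> u; rewrite -(porbit_cycle dD) => /porbitP[i ->].
  by rewrite -permM -(commuteX i (commute_sym cw)) permM wdj -!permM -!expgD addnC.
have cjD : c ^+ j \in 'N(D | 'P) by rewrite groupX // perm_on_astabs.
rewrite -ker_restr_perm; apply/kerP; first by rewrite groupX.
rewrite morphX //= (restr_perm_eq_in wD cjD w_cj) -morphX //.
by rewrite -expgM mulnC expgM cycle_expp expg1n morph1.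
Qed.

Section SmallSuborbits.
Variables (H : {group {perm T}}) (S : {set T}).
Hypotheses (trH : [transitive H, on S | 'P]) (cH : c \in H) (sDS : D \subset S)
  (card_S : (#|S| < 2 * p)%N).

Definition small_suborbit : rel T := fun u v =>
  [&& v \in S, v != u & (2 * #|orbit 'P 'C_H[u | 'P] v| <= #|S|)%N].

Definition small_component u := [set v | connect small_suborbit u v].

Let actsH := actsP (atrans_acts trH).

Lemma card_suborbitJ g u v : g \in H ->
  #|orbit 'P 'C_H[g u | 'P] (g v)| = #|orbit 'P 'C_H[u | 'P] v|.
Proof.
move=> Hg; rewrite -[g u]/('P%act u g) astab1_act -{1}(conjGid Hg) -conjIg.
have -> : orbit 'P ('C_H[u | 'P] :^ g) (g v) = g @: orbit 'P 'C_H[u | 'P] v.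
  apply/setP => w; rewrite -[w](permKV g) mem_imset; last exact: perm_inj.
  exact: (orbit_conjsg 'P).
by rewrite card_imset //; apply: perm_inj.
Qed.

Lemma small_suborbitJ g u v : g \in H ->
  small_suborbit (g u) (g v) = small_suborbit u v.
Proof.
by move=> Hg; rewrite /small_suborbit actsH // card_suborbitJ // (inj_eq perm_inj).
Qed.

Lemma small_componentJ g u :
  g \in H -> small_component (g u) = g @: small_component u.
Proof.
move=> Hg; apply/setP => w; rewrite inE; apply/idP/imsetP => [guw | [v uv ->]].
  exists (g^-1 w); last by rewrite permKV.
  rewrite inE -[u](permK g); move: guw; apply: homo_connect => a b.
  by rewrite small_suborbitJ ?groupV.
by move: uv; rewrite inE; apply: homo_connect => a b; rewrite small_suborbitJ.
Qed.

Lemma small_component_sub u : u \in S -> small_component u \subset S.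
Proof.
move=> Su; apply/subsetP => v; rewrite inE => /(connect_stable (a := [pred w | w \in S])).
by apply=> // a b /and3P[].
Qed.

Lemma card_small_component u w : u \in S -> w \in S ->
  #|small_component u| = #|small_component w|.
Proof.
move=> Su Sw; have [g Hg ->] := atransP2 trH Su Sw.
by rewrite small_componentJ // card_imset //; apply: perm_inj.
Qed.

Lemma small_component_eq u v : u \in S -> v \in small_component u ->
  small_component v = small_component u.
Proof.
move=> Su uv; have Sv := subsetP (small_component_sub Su) v uv.
apply/eqP; rewrite eqEcard (card_small_component Su Sv) leqnn andbT.
by apply/subsetP => w; rewrite !inE in uv *; apply: connect_trans.
Qed.

Lemma small_component_out x : x \in S :\: D -> small_component x \subset S :\: D.
Proof.
move=> SDx; apply/subsetP => v; rewrite inE.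
move/(connect_stable (a := [pred w | w \in S :\: D])); apply=> // a b.
rewrite /= !inE => /and3P[Sb _ small] /andP[aD _]; rewrite Sb andbT.
apply: contraTN small => bD.
have : D \subset orbit 'P 'C_H[a | 'P] b.
  rewrite -(porbit_cycle bD) porbitE; apply/subsetP => _ /orbitP[e ce <-].
  apply/orbitP; exists e => //; move: e ce; apply/subsetP; rewrite cycle_subG.
  by rewrite inE cH; apply/astab1P; apply: (out_perm c_on).
move/subset_leq_card; rewrite card_D -ltnNge => le_p.
by apply: leq_trans card_S _; rewrite leq_mul2l le_p orbT.
Qed.

Lemma cycle_sub_small_component d : d \in D -> (1 < #|small_component d|)%N ->
  D \subset small_component d.
Proof.
move=> dD; set B := small_component d; have Sd := subsetP sDS d dD.
have dB : d \in B by rewrite inE connect0.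
case/card_gt1P => u [w [uB wB uw]].
have {u w uB wB uw} [w wB wd] : exists2 w, w \in B & w != d.
  by have [ud | ?] := eqVneq u d; [exists w; rewrite // -ud eq_sym | exists u].
have Bw : small_component w = B := small_component_eq Sd wB.
have [e [ce e1 eB]] : exists e, [/\ e \in <[c]>, e != 1 & e @: B = B].
  have [wD | wD] := boolP (w \in D).
    have /porbitP[j wj] : w \in porbit c d by rewrite porbit_cycle.
    exists (c ^+ j); split; first exact: mem_cycle.
      by apply: contraNneq wd => cj1; rewrite wj cj1 perm1.
    by rewrite -small_componentJ ?groupX // -wj Bw.
  exists c; split; [exact: cycle_id | exact: cycle_neq1 |].
  by rewrite -Bw -small_componentJ // (out_perm c_on wD).
by apply: cycle_support_sub_stable ce e1 eB _; apply/set0Pn; exists d; rewrite inE dD.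
Qed.

Lemma suborbit_large x v : x \in S :\: D -> v \in S :\ x ->
  (#|S| < 2 * #|orbit 'P 'C_H[x | 'P] v|)%N.
Proof.
move=> SDx /setD1P[vx Sv]; rewrite ltnNge; apply/negP => small.
have Sx : x \in S by case/setDP: SDx.
have [d dD] := cycle_support_nonempty; have Sd := subsetP sDS d dD.
have comp_x : (1 < #|small_component x|)%N.
  apply/card_gt1P; exists x, v; split; rewrite ?inE ?connect0 // 1?eq_sym //.
  by apply: connect1; rewrite /small_suborbit Sv vx.
have := subset_leq_card (cycle_sub_small_component dD _).
rewrite (card_small_component Sd Sx) card_D => /(_ comp_x) le_p.
have := leq_trans le_p (subset_leq_card (small_component_out SDx)).
rewrite cardsD (setIidPr sDS) card_D leq_subRL -?card_D ?subset_leq_card //.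
by rewrite card_D addnn -mul2n leqNgt card_S.
Qed.

Lemma cycle_point_stab_transitive x : x \in S :\: D ->
  [transitive 'C_H[x | 'P], on S :\ x | 'P].
Proof.
move=> SDx; have [d dD] := cycle_support_nonempty.
apply: (atrans_large_orbits (x := d)).
- apply/subsetP => g /setIP[Hg /astab1P gx]; apply/astabsP => u.
  by rewrite !inE -{1}gx /= (inj_eq perm_inj) actsH.
- by rewrite !inE (subsetP sDS) // andbT; apply: contraTneq SDx => <-; rewrite inE dD.
- move=> v /(suborbit_large SDx); apply: leq_trans.
  by rewrite ltnS subset_leq_card // subsetDl.
Qed.

End SmallSuborbits.

Section Jordan.
Variable G : {group {perm T}}.
Hypotheses (trG : [transitive G, on [set: T] | 'P]) (cG : c \in G)
  (card_T : (#|T| < 2 * p)%N).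

Lemma pointwise_stab_transitive (F : {set T}) : F \subset ~: D ->
  [transitive 'C_G(F | 'P), on ~: F | 'P].
Proof.
elim: {F}_.+1 {-2}F (ltnSn #|F|) => // m IHm F; rewrite ltnS => leFm sFD.
have [-> | [x Fx]] := set_0Vmem F; first by rewrite setC0 subastab_set0.
set F' := F :\ x; have sF'D : F' \subset ~: D := subset_trans (subD1set F x) sFD.
have trF' : [transitive 'C_G(F' | 'P), on ~: F' | 'P].
  by apply: IHm sF'D; rewrite (cardsD1 x F) Fx in leFm.
have cF' : c \in 'C_G(F' | 'P).
  rewrite inE cG; apply/astabP => u /(subsetP sF'D); rewrite inE.
  exact: (out_perm c_on).
have sDF' : D \subset ~: F' by rewrite subsetC.
have card_F' : (#|~: F'| < 2 * p)%N := leq_ltn_trans (max_card _) card_T.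
have xF' : x \in ~: F' :\: D by rewrite !inE eqxx /= -in_setC (subsetP sFD).
have := cycle_point_stab_transitive trF' cF' sDF' card_F' xF'.
by rewrite subastab1_astab setCU1 setD1K.
Qed.

Lemma pointwise_stab_ntransitive m (F : {set T}) :
  F \subset ~: D -> (m <= #|~: D :\: F|)%N -> [transitive^m 'C_G(F | 'P), on ~: F | 'P].
Proof.
elim: m F => [|m IHm] F sFD le_mF; first exact: ntransitive0.
have [x DFx] : exists x, x \in ~: D :\: F.
  by apply/set0Pn; rewrite -card_gt0; apply: leq_trans le_mF.
have [xD xF] := setDP DFx.
apply: (stab_ntransitiveI (x := x)); first by rewrite inE.
  exact: pointwise_stab_transitive.
rewrite subastab1_astab setCU1; apply: IHm; first by rewrite subUset sub1set xD.
by rewrite setUC -setDDl; move: le_mF; rewrite (cardsD1 x) DFx.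
Qed.

Lemma ntransitive_cycle_group m :
  (m <= #|T| - p)%N -> [transitive^m G, on [set: T] | 'P].
Proof.
move=> le_m; have := @pointwise_stab_ntransitive m set0.
rewrite subastab_set0 setC0 setD0 cardsCs setCK card_D; apply; rewrite ?sub0set //.
Qed.

Lemma Frattini_cycle g : g \in 'N_G(D | 'P) ->
  exists2 h, h \in 'N_('N_G(D | 'P))(<[c]>) & {in ~: D, h =1 g}.
Proof.
set K := 'C_G(~: D | 'P).
have sylK : p.-Sylow(K) <[c]>.
  apply: cycle_Sylow p_pr _ _ order_cycle.
    apply: leq_trans (logn_fact_small p_pr card_T); apply: dvdn_leq_log.
      exact: fact_gt0.
    by rewrite -card_Sym cardSg ?subsetT.
  by rewrite inE cG; apply/astabP => u; rewrite inE; apply: (out_perm c_on).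
have nKN : K <| 'N_G(D | 'P).
  apply/andP; split; first by rewrite setIS // -astabsC astab_sub.
  rewrite normsI ?(normsG (subsetIl _ _)) // -astabsC.
  exact: subset_trans (subsetIr _ _) (astab_norm _ _).
move=> gN; rewrite -(Frattini_arg nKN sylK) in gN; case/mulsgP: gN => k h Kk Nh ->.
exists h => // u uD; case/setIP: Kk => _ Ck.
by rewrite permM -[k u]/('P%act u k) (astab_act Ck uD).
Qed.

Lemma tperm_lift x y : x \in ~: D -> y \in ~: D -> x != y ->
  exists2 h, h \in 'N_('N_G(D | 'P))(<[c]>) &
    restr_perm (~: D) h = restr_perm (~: D) (tperm x y).
Proof.
move=> xD yD xy; set F := ~: D :\: [set x; y].
have sxyD : [set x; y] \subset ~: D by rewrite subUset !sub1set xD yD.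
have tr2 : [transitive^2 'C_G(F | 'P), on ~: F | 'P].
  apply: pointwise_stab_ntransitive; first exact: subsetDl.
  by rewrite setDDr setDv set0U (setIidPr sxyD) cards2 xy.
have xyF : [set x; y] \subset ~: F by rewrite subsetC /F setDE subsetIr.
have dt u v : u != v -> u \in [set x; y] -> v \in [set x; y] ->
    [tuple u; v] \in 2.-dtuple(~: F).
  move=> uv uxy vxy; rewrite inE /= !inE uv; apply/subsetP => w.
  by rewrite mem_seq2 => /orP[]/eqP->; apply: (subsetP xyF).
have yx : y != x by rewrite eq_sym.
have [g /setIP[Gg gF] /(congr1 val) [gx gy]] :=
  atransP2 tr2 (dt x y xy (set21 x y) (set22 x y)) (dt y x yx (set22 x y) (set21 x y)).
have g_t : {in ~: D, g =1 tperm x y}.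
  move=> u uD; have [-> | ux] := eqVneq u x; first by rewrite tpermL.
  have [-> | uy] := eqVneq u y; first by rewrite tpermR.
  rewrite tpermD 1?eq_sym // -[g u]/('P%act u g) (astab_act gF) //.
  by rewrite !inE negb_or ux uy -in_setC uD.
have tD : tperm x y \in 'N(~: D | 'P).
  exact/perm_on_astabs/(subset_trans (tperm_on x y)).
have gN : g \in 'N_G(D | 'P) by rewrite inE Gg -astabsC (astabs_eq_in tD g_t).
have [h hN h_g] := Frattini_cycle gN.
exists h => //; apply: restr_perm_eq_in tD _ => [|u uD]; last by rewrite h_g ?g_t.
by case/setIP: hN => /setIP[_]; rewrite -astabsC.
Qed.

Hypothesis card_T3 : (p + 3 <= #|T|)%N.

Lemma Jordan_prime_cycle : 'Alt_T \subset G.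
Proof.
have p_gt3 : (3 < p)%N by move: card_T card_T3; lia.
have [x [y [z [[xD yD zD] [xy yz zx]]]]] : exists x y z,
    [/\ x \in ~: D, y \in ~: D & z \in ~: D] /\ [/\ x != y, y != z & z != x].
  by apply/card_gt2P; rewrite cardsCs setCK card_D; move: card_T3; lia.
have xz : x != z by rewrite eq_sym.
have [h1 /setIP[/setIP[Gh1 Dh1] nh1] r_h1] := tperm_lift yD zD yz.
have [h2 /setIP[/setIP[Gh2 Dh2] nh2] r_h2] := tperm_lift xD yD xy.
set w := [~ h1, h2]; set t := tperm x y * tperm y z.
have wpC : w ^+ p \in 'C(D | 'P).
  exact/cent_cycle_expp/commute_commg_norm_cycle.
have tC : t \in 'C(D | 'P).
  by apply/groupM; apply/astabP => u uD; apply: tpermD;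
    apply: contraTneq uD => <-; rewrite -in_setC.
have pp_mod3 : (p * p %% 3 = 1)%N.
  have : ~~ (3 %| p) by rewrite dvdn_prime2 // ltn_eqF.
  by rewrite /dvdn -modnMm; case: (p %% 3) (ltn_mod p 3) => [|[|[|]]].
(* On [~: D], [w] acts as [[~ tperm y z, tperm x y] = t], a 3-cycle, and
   [p * p = 1 %[mod 3]]; on [D], [w ^+ p] is trivial. *)
have t_w : t = (w ^+ p) ^+ p.
  apply: (restr_perm_inj (A := ~: D)); rewrite ?setCK //; first exact: groupX.
  have ND f : f \in 'N(D | 'P) -> f \in 'N(~: D | 'P) by rewrite astabsC.
  have tD u v : u \in ~: D -> v \in ~: D -> tperm u v \in 'N(~: D | 'P).
    move=> uD vD; apply/perm_on_astabs/(subset_trans (tperm_on u v)).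
    by rewrite subUset !sub1set uD vD.
  rewrite -expgM /w morphX ?groupR ?ND //= morphR ?ND //= r_h1 r_h2.
  rewrite -morphR ?tD //= -morphX ?groupR ?tD //= commg_tperm //.
  by rewrite -(expg_mod _ (tperm_cycle3 xy yz xz)) pp_mod3.
apply: (Alt_sub_3cycle _ (ntransitive_cycle_group _) xy yz xz).
- by have := prime_gt1 p_pr; rewrite -(leq_add2r 3) => /leq_trans; apply.
- by rewrite leq_subRL // (leq_trans (leq_addr 3 p) card_T3).
- by rewrite -/t t_w !groupX ?groupR.
Qed.

End Jordan.

End PrimeCycle.

Section LongCycle.
Variables (T : finType) (s : {perm T}) (x0 : T) (p : nat).
Hypotheses (p_pr : prime p) (card_x0 : #|porbit s x0| = p) (card_T : (#|T| < 2 * p)%N).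

Lemma porbit_expg_fact : porbit (s ^+ (#|T| - p)`!) x0 = porbit s x0.
Proof.
apply: porbit_expg; rewrite card_x0 coprime_sym prime_coprime // prime_dvdn_fact //.
by rewrite -ltnNge; move: card_T; lia.
Qed.

Lemma perm_on_expg_fact : perm_on (porbit s x0) (s ^+ (#|T| - p)`!).
Proof.
apply/subsetP => u; rewrite inE; apply: contraR => ux0.
rewrite -card_porbit_dvdn dvdn_fact // lt0n card_porbit_neq0 /=.
rewrite -card_x0 -(cardsC (porbit s x0)) addKn; apply: subset_leq_card.
apply/subsetP => v vu; rewrite inE; apply: contra ux0 => vx0.
have <- : porbit s v = porbit s x0 by apply/eqP; rewrite eq_porbit_mem.
by rewrite porbit_sym.
Qed.

End LongCycle.

Lemma card_sep_andb (T : finType) (A : {set T}) (P Q R : pred T) :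
  {in A, Q =1 R} ->
  #|[set x in A | P x && Q x]| =
    (#|[set x in A | P x]| - #|[set x in A | P x && ~~ R x]|)%N.
Proof.
move=> QR; have -> : [set x in A | P x && Q x] = [set x in A | P x] :&: [set x | R x].
  apply/setP => x; rewrite !inE.
  by have [/QR-> | _] := boolP (x \in A); first by rewrite andbA.
have -> : [set x in A | P x && ~~ R x] = [set x in A | P x] :\: [set x | R x].
  by apply/setP => x; rewrite !inE; case: (R x); rewrite ?andbT ?andbF.
by rewrite -(cardsID [set x | R x] [set x in A | P x]) addnK.
Qed.

Theorem corollary5p3 (n p : nat) (pi : {perm 'I_n}) (C : {set {perm 'I_n}}) :
  prime p -> n < 2 * p -> p <= n - 3 ->
  pi \in 'Alt_('I_n) ->
  (exists x : 'I_n, #|porbit pi x| = p) ->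
  C \in classes [set: {perm 'I_n}] ->
  #|[set s in 'Alt_('I_n) | ([~ pi, s] \in C) && (<<[set pi; s]>> == 'Alt_('I_n))]|
  = (#|[set s in 'Alt_('I_n) | [~ pi, s] \in C]|
     - #|[set s in 'Alt_('I_n) | ([~ pi, s] \in C) &&
            ~~ [transitive <<[set pi; s]>>, on [set: 'I_n] | 'P]]|)%N.
Proof.
move=> p_pr lt_n2p le_pn3 piA [x0 card_x0] _.
have card_T : (#|'I_n| < 2 * p)%N by rewrite card_ord.
have card_T3 : (p + 3 <= #|'I_n|)%N.
  by rewrite card_ord; move: le_pn3 (prime_gt1 p_pr); lia.
set c := pi ^+ (#|'I_n| - p)`!.
have c_on := perm_on_expg_fact card_x0.
have D_orbit : porbit pi x0 \in porbits c.
  by apply/imsetP; exists x0; rewrite // porbit_expg_fact.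
have genE s : s \in 'Alt_('I_n) ->
    (<<[set pi; s]>> == 'Alt_('I_n)) = [transitive <<[set pi; s]>>, on [set: 'I_n] | 'P].
  move=> sA; apply/eqP/idP => [-> | trG].
    apply: (ntransitive1 _ (Alt_trans _)); rewrite card_ord; move: card_T3; lia.
  apply/eqP; rewrite eqEsubset gen_subG subUset !sub1set piA sA.
  apply: (Jordan_prime_cycle p_pr c_on D_orbit card_x0 trG _ card_T card_T3).
  by rewrite groupX // mem_gen // set21.
exact: card_sep_andb.
Qed.
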